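(* Let $G$ be a positively $0$-transitive Lie superalgebra whose positive part $G_+$ is generated by $G_1$, and let $U$ be the universal Lie superalgebra associated to $U_1:=G_1$. (a) There exist a subspace $T_{0-}\subseteq U_{0-}$ such that $T_{0-}\oplus U_+$ is a subalgebra of $U$ (in particular $T_{0-}$ is a subalgebra of $U_{0-}$), and an ideal $D_{2+}$ of $T_{0-}\oplus U_+$ contained in $U_{2+}$, such that $G\cong(T_{0-}\oplus U_+)/D_{2+}$ as Lie superalgebras. (b) Conversely, for any subspace $T_{0-}\subseteq U_{0-}$ such that $T_{0-}\oplus U_+$ is a subalgebra of $U$ and any ideal $D_{2+}$ of $T_{0-}\oplus U_+$ contained in $U_{2+}$, the quotient $(T_{0-}\oplus U_+)/D_{2+}$ is a positively $0$-transitive Lie superalgebra whose positive part is generated by its degree-$1$ subspace.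
   Context: All vector spaces are over $\mathbb{K}=\mathbb{R}$ or $\mathbb{C}$, $\mathbb{Z}$-graded, parity equal to degree mod 2; morphisms preserve degree; subalgebras and ideals are graded. A Lie superalgebra is a graded space with degree-preserving bracket satisfying $[x,y]=-(-1)^{|x||y|}[y,x]$ and $[x,[y,z]]-(-1)^{|x||y|}[y,[x,z]]=[[x,y],z]$. $G_\pm=\bigoplus_{k\ge1}G_{\pm k}$, $G_{p-}=\bigoplus_{k\le p}G_k$, $G_{p+}=\bigoplus_{k\ge p}G_k$. $G$ is positively $0$-transitive if for $x\in G_{0-}$, $[G_+,x]=0$ implies $x=0$. Universal Lie superalgebra: for $U_1$ concentrated in degree 1 (odd), put $U_0=\mathrm{End}(U_1)$, $U_{-p+1}=\mathrm{Hom}(U_1,U_{-p+2})$ for $p\ge2$; on $U_{1-}=\bigoplus_{k\le1}U_k$ define brackets recursively by $[x,u]=x(u)$, $[u,x]=-(-1)^{|x|}x(u)$, $[x,y](u)=[x,y(u)]+(-1)^{|y|}[x(u),y]$ ($x,y\in U_{0-}$, $u\in U_1$), giving a semilocal Lie superalgebra (brackets defined when degrees sum to $\le1$); $U$ is the unique Lie superalgebra extending it such that $U_+$ is the free Lie superalgebra generated by $U_1$. *)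

From HB Require Import structures.
From mathcomp Require Import all_boot all_order all_algebra.
Set Implicit Arguments. Unset Strict Implicit. Unset Printing Implicit Defensive.

Import Order.TTheory GRing.Theory Num.Theory.
Local Open Scope ring_scope.

(* A Z-graded Lie superalgebra over K, presented through its total space
   (the direct sum of its homogeneous components):
   - lsa_car : the total space (a K-vector space),
   - lsa_br  : the (bilinear) bracket,
   - lsa_gr k x : "x is homogeneous of degree k" (x \in A_k). *)
Record lsalg (K : numFieldType) := LSAlg {
  lsa_car :> lmodType K;
  lsa_br : lsa_car -> lsa_car -> lsa_car;
  lsa_gr : int -> lsa_car -> Prop }.
Arguments lsa_br {K} l _ _.
Arguments lsa_gr {K} l _ _.

Section LieSuper.
Variable K : numFieldType.

Definition par (i : int) : bool := odd (absz i).
Definition ssign (i j : int) : K := (-1) ^+ (par i && par j).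

Section OneAlg.
Variable A : lsalg K.
Local Notation br := (lsa_br A).
Local Notation gr := (lsa_gr A).

Definition subspace (P : A -> Prop) : Prop :=
  P 0 /\ forall (a : K) (x y : A), P x -> P y -> P (a *: x + y).

(* v lies in the sum of the homogeneous components of degrees k with p k,
   e.g. hsum (fun k => 0 < k) = A_+, hsum (fun k => k <= 0) = A_{0-}. *)
Definition hsum (p : pred int) (v : A) : Prop :=
  exists (s : seq int) (f : int -> A),
    (forall k, gr k (f k)) /\ v = \sum_(k <- s | p k) f k.

Definition is_lsalg : Prop :=
  (forall (a : K) (x y z : A), br (a *: x + y) z = a *: br x z + br y z) /\
  (forall (a : K) (x y z : A), br x (a *: y + z) = a *: br x y + br x z) /\
  (forall k, subspace (gr k)) /\
  (* the total space is the direct sum of the A_k *)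
  (forall v : A, hsum predT v) /\
  (forall (s : seq int) (f : int -> A), uniq s -> (forall k, gr k (f k)) ->
     \sum_(k <- s) f k = 0 -> forall k, k \in s -> f k = 0) /\
  (forall (i j : int) (x y : A), gr i x -> gr j y -> gr (i + j) (br x y)) /\
  (forall (i j : int) (x y : A), gr i x -> gr j y ->
     br x y = - (ssign i j *: br y x)) /\
  (forall (i j k : int) (x y z : A), gr i x -> gr j y -> gr k z ->
     br x (br y z) - ssign i j *: br y (br x z) = br (br x y) z).

Definition graded_sub (P : A -> Prop) : Prop :=
  subspace P /\
  forall v, P v -> exists (s : seq int) (f : int -> A),
    (forall k, gr k (f k) /\ P (f k)) /\ v = \sum_(k <- s) f k.

Definition subalg (S : A -> Prop) : Prop :=
  graded_sub S /\ forall x y, S x -> S y -> S (br x y).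

Definition ideal_in (S D : A -> Prop) : Prop :=
  graded_sub D /\ (forall x, D x -> S x) /\
  (forall x y, S x -> D y -> D (br x y)) /\
  (forall x y, D x -> S y -> D (br x y)).

Inductive gen_by (X : A -> Prop) : A -> Prop :=
| gen_in x : X x -> gen_by X x
| gen_zero : gen_by X 0
| gen_lin (a : K) x y : gen_by X x -> gen_by X y -> gen_by X (a *: x + y)
| gen_br x y : gen_by X x -> gen_by X y -> gen_by X (br x y).

Definition pos0trans : Prop :=
  forall x, hsum (fun k => k <= 0) x ->
    (forall y, hsum (fun k => 0 < k) y -> br y x = 0) -> x = 0.

Definition gen_deg1 : Prop :=
  forall v, hsum (fun k => 0 < k) v -> gen_by (gr 1) v.

End OneAlg.






Definition lin_on (A B : lsalg K) (P : A -> Prop) (f : A -> B) : Prop :=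
  forall (a : K) (x y : A), P x -> P y -> f (a *: x + y) = a *: f x + f y.

(* The universal Lie superalgebra U associated to U_1, characterized up to
   isomorphism:
   (i) for k <= 0, x |-> ([x, .] restricted to U_1) is a linear bijection
       U_k -> Hom(U_1, U_{k+1})  (this is U_0 = End(U_1),
       U_{-p+1} = Hom(U_1, U_{-p+2}), the brackets with U_1 being
       [x,u] = x(u); all other brackets in U_{1-} are then forced by
       super skew-symmetry and Jacobi, and coincide with the recursive ones);
   (ii) U_+ is the free Lie superalgebra on U_1 (universal property). *)
Definition universal (U : lsalg K) : Prop :=
  (forall (k : int), k <= 0 ->
     (forall x, lsa_gr U k x -> (forall u, lsa_gr U 1 u -> lsa_br U x u = 0) ->
        x = 0) /\
     (forall phi : U -> U, lin_on (lsa_gr U 1) phi ->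
        (forall u, lsa_gr U 1 u -> lsa_gr U (k + 1) (phi u)) ->
        exists x, lsa_gr U k x /\ forall u, lsa_gr U 1 u -> lsa_br U x u = phi u)) /\
  (forall (L : lsalg K), is_lsalg L ->
     forall f : U -> L, lin_on (lsa_gr U 1) f ->
       (forall u, lsa_gr U 1 u -> lsa_gr L 1 (f u)) ->
       exists g : U -> L,
         [/\ forall u, lsa_gr U 1 u -> g u = f u,
             lin_on (@hsum U (fun k => 0 < k)) g,
             forall x y, @hsum U (fun k => 0 < k) x -> @hsum U (fun k => 0 < k) y ->
               g (lsa_br U x y) = lsa_br L (g x) (g y) &
             forall g' : U -> L,
               (forall u, lsa_gr U 1 u -> g' u = f u) ->
               lin_on (@hsum U (fun k => 0 < k)) g' ->
               (forall x y, @hsum U (fun k => 0 < k) x -> @hsum U (fun k => 0 < k) y ->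
                  g' (lsa_br U x y) = lsa_br L (g' x) (g' y)) ->
               forall x, @hsum U (fun k => 0 < k) x -> g' x = g x]).

Definition iso_deg1 (A B : lsalg K) : Prop :=
  exists i : A -> B,
    [/\ lin_on (lsa_gr A 1) i,
        forall u, lsa_gr A 1 u -> lsa_gr B 1 (i u),
        forall u v, lsa_gr A 1 u -> lsa_gr A 1 v -> i u = i v -> u = v &
        forall w, lsa_gr B 1 w -> exists u, lsa_gr A 1 u /\ i u = w].

Definition TplusUp (U : lsalg K) (T : U -> Prop) : U -> Prop :=
  fun v => exists t w, T t /\ @hsum U (fun k => 0 < k) w /\ v = t + w.

Definition good_T (U : lsalg K) (T : U -> Prop) : Prop :=
  [/\ graded_sub T, forall v, T v -> @hsum U (fun k => k <= 0) v &
      subalg (TplusUp T)].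

(* Q is (isomorphic to) the quotient S / D of the subalgebra S by its ideal D:
   there is a surjective degree-preserving homomorphism of Lie superalgebras
   S -> Q with kernel exactly D. *)
Definition quot_iso (U : lsalg K) (S D : U -> Prop) (Q : lsalg K) : Prop :=
  exists pi : U -> Q,
    [/\ lin_on S pi,
        forall k x, S x -> lsa_gr U k x -> lsa_gr Q k (pi x),
        forall x y, S x -> S y -> pi (lsa_br U x y) = lsa_br Q (pi x) (pi y),
        forall q : Q, exists x, S x /\ pi x = q &
        forall x, S x -> (pi x = 0 <-> D x)].

End LieSuper.

Arguments hsum {K} A p v.

(* (b) A homogeneous element of degree k <= 0 of the quotient that is killed by
   its positive part lifts to some t in T_{0-}; then [U_1, t] lies in the kernel,
   hence in U_{2+}, while having degree k + 1 <= 1, so [U_1, t] = 0 and t = 0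
   because ad : U_k -> Hom(U_1, U_{k+1}) is injective. The positive part of the
   quotient is generated in degree 1 because U_+ is (a consequence of freeness).

   (a) Freeness extends U_1 = G_1 to a surjective homomorphism g : U_+ -> G_+.
   Descending in degree, positive 0-transitivity of G and the bijectivity of
   ad : U_k -> Hom(U_1, U_{k+1}) attach to each x in G_k (k <= 0) a unique t in
   U_k whose brackets with U_1 correspond to those of x with g(U_1). These t form
   T_{0-}, the Jacobi identity makes the resulting map T_{0-} (+) U_+ -> G a
   surjective homomorphism, and its kernel D lies in U_{2+} since it is injective
   in degrees <= 1. *)

From HB Require Import structures.
From mathcomp Require Import all_boot all_order all_algebra.
From Stdlib Require Import ClassicalEpsilon FunctionalExtensionality PropExtensionality.
From mathcomp Require Import zify.
Import Order.TTheory GRing.Theory Num.Theory.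
Set Implicit Arguments. Unset Strict Implicit. Unset Printing Implicit Defensive.
Local Open Scope ring_scope.

Lemma sum_pred1_seq (V : nmodType) (I : eqType) (t : seq I) (j : I) (F : I -> V) :
  uniq t -> \sum_(m <- t) (if j == m then F m else 0) = if j \in t then F j else 0.
Proof.
elim: t => [|m t IH] /=; first by rewrite big_nil.
case/andP=> mt ut; rewrite big_cons IH // in_cons.
case: (eqVneq j m) => [->|ne] /=; first by rewrite (negbTE mt) addr0.
by rewrite add0r.
Qed.

Lemma sum_fibers_seq (V : nmodType) (I : eqType) (u s : seq I) (F : I -> V) :
  uniq u -> {subset s <= u} ->
  \sum_(m <- u) \sum_(j <- s | j == m) F j = \sum_(j <- s) F j.
Proof.
move=> uu su; under eq_bigr do rewrite big_mkcond.
rewrite exchange_big /=; apply: eq_big_seq => j js.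
by rewrite (@sum_pred1_seq _ _ _ _ (fun _ => F j)) // su.
Qed.

Lemma sum_seq_supp (V : nmodType) (I : eqType) (t t0 : seq I) (F : I -> V) :
  uniq t -> uniq t0 -> {subset t0 <= t} -> (forall m, m \notin t0 -> F m = 0) ->
  \sum_(m <- t) F m = \sum_(m <- t0) F m.
Proof.
move=> ut ut0 sub h.
rewrite (bigID (fun m => m \in t0)) /= [X in _ + X]big1 ?addr0; last by move=> m /h.
rewrite -big_filter; apply: perm_big; apply: uniq_perm; [exact: filter_uniq| done|].
by move=> m; rewrite mem_filter; case e: (m \in t0) => //=; rewrite sub.
Qed.

(** * Linear algebra on subspaces of a graded space *)

Section Subspace.
Variables (K : numFieldType) (A : lsalg K) (P : A -> Prop).
Hypothesis sP : subspace P.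

Lemma subspace0 : P 0. Proof. by case: sP. Qed.
Lemma subspaceD x y : P x -> P y -> P (x + y).
Proof. by case: sP => _ h hx hy; have := h 1 x y hx hy; rewrite scale1r. Qed.
Lemma subspaceZ a x : P x -> P (a *: x).
Proof. by case: sP => h0 h hx; have := h a x 0 hx h0; rewrite addr0. Qed.
Lemma subspaceN x : P x -> P (- x).
Proof. by move=> hx; rewrite -scaleN1r; apply: subspaceZ. Qed.
Lemma subspaceB x y : P x -> P y -> P (x - y).
Proof. by move=> hx hy; apply: subspaceD => //; apply: subspaceN. Qed.
Lemma subspace_sum I (r : seq I) (Q : pred I) (F : I -> A) :
  (forall i, Q i -> P (F i)) -> P (\sum_(i <- r | Q i) F i).
Proof.
move=> h; elim: r => [|i r IH]; first by rewrite big_nil; apply: subspace0.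
by rewrite big_cons; case: ifP => qi //; apply: subspaceD => //; exact: h.
Qed.

End Subspace.

Section LinearOn.
Variables (K : numFieldType) (A B : lsalg K) (P : A -> Prop) (f : A -> B).
Hypotheses (sP : subspace P) (linf : lin_on P f).

Lemma lin_on0 : f 0 = 0.
Proof.
have P0 := subspace0 sP; have := linf 1 P0 P0; rewrite !scale1r addr0 => e.
by apply: (@addrI _ (f 0)); rewrite addr0 -e.
Qed.

Lemma lin_onD x y : P x -> P y -> f (x + y) = f x + f y.
Proof. by move=> px py; have := linf 1 px py; rewrite !scale1r. Qed.

Lemma lin_onZ a x : P x -> f (a *: x) = a *: f x.
Proof.
by move=> px; have := linf a px (subspace0 sP); rewrite !addr0 lin_on0 addr0.
Qed.

Lemma lin_onN x : P x -> f (- x) = - f x.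
Proof. by move=> px; rewrite -scaleN1r lin_onZ // scaleN1r. Qed.

Lemma lin_onB x y : P x -> P y -> f (x - y) = f x - f y.
Proof. by move=> px py; rewrite lin_onD ?lin_onN //; exact: subspaceN. Qed.

Lemma lin_on_sum I (r : seq I) (Q : pred I) (F : I -> A) :
  (forall i, Q i -> P (F i)) -> f (\sum_(i <- r | Q i) F i) = \sum_(i <- r | Q i) f (F i).
Proof.
move=> hF; elim: r => [|i r IH]; first by rewrite !big_nil lin_on0.
rewrite !big_cons; case: ifP => qi //.
by rewrite lin_onD ?IH //; [apply: hF | apply: subspace_sum].
Qed.

End LinearOn.

(** * Homogeneous components *)

Section Graded.
Variables (K : numFieldType) (A : lsalg K).
Hypothesis HA : is_lsalg A.
Local Notation br := (lsa_br A).
Local Notation gr := (lsa_gr A).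

Lemma br_linl a x y z : br (a *: x + y) z = a *: br x z + br y z.
Proof. by case: HA => h _; apply: h. Qed.
Lemma br_linr a x y z : br x (a *: y + z) = a *: br x y + br x z.
Proof. by case: HA => _ [h _]; apply: h. Qed.
Lemma gr_subspace k : subspace (gr k).
Proof. by case: HA => _ [_ [h _]]; apply: h. Qed.
Lemma hsumT v : hsum A predT v.
Proof. by case: HA => _ [_ [_ [h _]]]; apply: h. Qed.
Lemma homog_sum_eq0 (s : seq int) (f : int -> A) : uniq s -> (forall k, gr k (f k)) ->
  \sum_(k <- s) f k = 0 -> forall k, k \in s -> f k = 0.
Proof. by case: HA => _ [_ [_ [_ [h _]]]]; apply: h. Qed.
Lemma gr_br i j x y : gr i x -> gr j y -> gr (i + j) (br x y).
Proof. by case: HA => _ [_ [_ [_ [_ [h _]]]]]; apply: h. Qed.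
Lemma brC i j x y : gr i x -> gr j y -> br x y = - (ssign K i j *: br y x).
Proof. by case: HA => _ [_ [_ [_ [_ [_ [h _]]]]]]; apply: h. Qed.
Lemma br_jacobi i j k x y z : gr i x -> gr j y -> gr k z ->
  br x (br y z) - ssign K i j *: br y (br x z) = br (br x y) z.
Proof. by case: HA => _ [_ [_ [_ [_ [_ [_ h]]]]]]; apply: h. Qed.

Lemma br_jacobi_right i j k x y z : gr i x -> gr j y -> gr k z ->
  br x (br y z) = br (br x y) z - (ssign K i j * ssign K j (i + k)) *: br (br x z) y.
Proof.
move=> hx hy hz; rewrite -(br_jacobi hx hy hz) (brC hy (gr_br hx hz)).
by rewrite scalerN scalerA opprK addrK.
Qed.

Lemma br0l z : br 0 z = 0.
Proof.
have := br_linl 1 0 0 z; rewrite !scale1r addr0 => h.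
by apply: (@addrI _ (br 0 z)); rewrite addr0 -h.
Qed.
Lemma br0r z : br z 0 = 0.
Proof.
have := br_linr 1 z 0 0; rewrite !scale1r addr0 => h.
by apply: (@addrI _ (br z 0)); rewrite addr0 -h.
Qed.
Lemma brZl a x z : br (a *: x) z = a *: br x z.
Proof. by have := br_linl a x 0 z; rewrite !addr0 br0l addr0. Qed.
Lemma brDl x y z : br (x + y) z = br x z + br y z.
Proof. by have := br_linl 1 x y z; rewrite !scale1r. Qed.
Lemma brDr x y z : br z (x + y) = br z x + br z y.
Proof. by have := br_linr 1 z x y; rewrite !scale1r. Qed.
Lemma brBl x y z : br (x - y) z = br x z - br y z.
Proof. by rewrite brDl -scaleN1r brZl scaleN1r. Qed.
Lemma br_suml I (r : seq I) (P : pred I) (F : I -> A) z :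
  br (\sum_(i <- r | P i) F i) z = \sum_(i <- r | P i) br (F i) z.
Proof. by apply: (big_morph (fun x => br x z)) => [x y|]; rewrite ?brDl ?br0l. Qed.
Lemma br_sumr I (r : seq I) (P : pred I) (F : I -> A) z :
  br z (\sum_(i <- r | P i) F i) = \sum_(i <- r | P i) br z (F i).
Proof. by apply: (big_morph (fun x => br z x)) => [x y|]; rewrite ?brDr ?br0r. Qed.

Lemma gr0 k : gr k 0. Proof. exact: subspace0 (gr_subspace k). Qed.
Lemma grD k x y : gr k x -> gr k y -> gr k (x + y). Proof. exact: (subspaceD (gr_subspace k)). Qed.
Lemma grZ k a x : gr k x -> gr k (a *: x). Proof. exact: (subspaceZ (gr_subspace k)). Qed.
Lemma grB k x y : gr k x -> gr k y -> gr k (x - y). Proof. exact: (subspaceB (gr_subspace k)). Qed.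
Lemma gr_lin k a x y : gr k x -> gr k y -> gr k (a *: x + y).
Proof. by move=> hx hy; apply: grD => //; apply: grZ. Qed.
Lemma gr_sum_eq (s : seq int) (f : int -> A) k : (forall j, gr j (f j)) ->
  gr k (\sum_(j <- s | j == k) f j).
Proof. by move=> h; apply: (subspace_sum (gr_subspace k)) => j /eqP <-. Qed.

(* [proj k v] is the component of degree k of v, read off a decomposition chosen
   by [epsilon]; by [proj_sum_homog] it does not depend on that choice. *)
Definition homog_dec (v : A) : seq int * (int -> A) :=
  epsilon (inhabits ([::], fun _ => 0))
    (fun sf => (forall k, gr k (sf.2 k)) /\ v = \sum_(k <- sf.1) sf.2 k).

Lemma homog_decP v : (forall k, gr k ((homog_dec v).2 k)) /\
  v = \sum_(k <- (homog_dec v).1) (homog_dec v).2 k.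
Proof.
apply: (epsilon_spec (inhabits ([::], fun _ => 0))
  (fun sf : seq int * (int -> A) => (forall k, gr k (sf.2 k)) /\ v = \sum_(k <- sf.1) sf.2 k)).
by have [s [f [h1 h2]]] := hsumT v; exists (s, f).
Qed.

Definition proj (k : int) (v : A) : A :=
  \sum_(j <- (homog_dec v).1 | j == k) (homog_dec v).2 j.

Lemma proj_gr k v : gr k (proj k v).
Proof. by rewrite /proj; have [h1 h2] := homog_decP v; exact: gr_sum_eq. Qed.

Lemma proj_sum_homog (t : seq int) (g : int -> A) k : uniq t -> (forall m, gr m (g m)) ->
  proj k (\sum_(m <- t) g m) = if k \in t then g k else 0.
Proof.
move=> ut hg; rewrite /proj; have [] := homog_decP (\sum_(m <- t) g m).
case: (homog_dec _) => s0 f0 /= h1 h2.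
set u := undup (t ++ s0); have uu : uniq u by apply: undup_uniq.
pose H m := (if m \in t then g m else 0) - \sum_(j <- s0 | j == m) f0 j.
have gH m : gr m (H m).
  by apply: grB; [case: ifP => _; [apply: hg | apply: gr0] | exact: gr_sum_eq].
have sH : \sum_(m <- u) H m = 0.
  rewrite /H sumrB sum_fibers_seq //; last by move=> j js; rewrite mem_undup mem_cat js orbT.
  rewrite -big_mkcond /= -big_filter -h2 (perm_big t) ?subrr //.
  apply: uniq_perm; [exact: filter_uniq | exact: ut |] => m.
  by rewrite mem_filter mem_undup mem_cat; case: (m \in t).
have [ku|] := boolP (k \in u).
  by have := homog_sum_eq0 uu gH sH ku; rewrite /H => /eqP; rewrite subr_eq0 => /eqP.
rewrite mem_undup mem_cat negb_or => /andP[kt ks].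
rewrite (negbTE kt) big1_seq // => j /andP[/eqP -> js].
by rewrite js in ks.
Qed.

Lemma proj_homog j k x : gr j x -> proj k x = if k == j then x else 0.
Proof.
move=> hx; pose g m := if m == j then x else 0.
have hg m : gr m (g m) by rewrite /g; case: eqP => [->|_] //; apply: gr0.
have := proj_sum_homog k (t := [:: j]) (g := g) erefl hg.
by rewrite big_seq1 inE /g eqxx => ->; case: (k == j).
Qed.

Lemma proj_id k x : gr k x -> proj k x = x.
Proof. by move=> h; rewrite (proj_homog k h) eqxx. Qed.
Lemma proj_eq0 j k x : gr j x -> k != j -> proj k x = 0.
Proof. by move=> h ne; rewrite (proj_homog k h) (negbTE ne). Qed.

Lemma homog_decomp v : exists t, [/\ uniq t, forall m, m \notin t -> proj m v = 0 &
  v = \sum_(m <- t) proj m v].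
Proof.
exists (undup (homog_dec v).1); split; first exact: undup_uniq.
  move=> m; rewrite mem_undup /proj => ms; rewrite big1_seq // => j /andP[/eqP -> js].
  by rewrite js in ms.
rewrite /proj; have [] := homog_decP v; case: (homog_dec v) => s f /= h1 h2.
by rewrite sum_fibers_seq ?undup_uniq // => j; rewrite mem_undup.
Qed.

Lemma homog_decomp_on v t : uniq t -> (forall m, m \notin t -> proj m v = 0) ->
  v = \sum_(m <- t) proj m v.
Proof.
move=> ut ht; have [t0 [ut0 h0 ->]] := homog_decomp v.
set w := \sum_(m <- t0) proj m v.
have -> : \sum_(m <- t) proj m w = \sum_(m <- t) proj m v.
  apply: eq_bigr => m _; rewrite /w proj_sum_homog //; last by move=> n; apply: proj_gr.
  by case: ifP => // /negbT /h0 ->.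
rewrite /w; transitivity (\sum_(m <- undup (t ++ t0)) proj m v).
  symmetry; apply: sum_seq_supp; rewrite ?undup_uniq //.
  by move=> m; rewrite mem_undup mem_cat => ->; rewrite orbT.
apply: sum_seq_supp; rewrite ?undup_uniq //.
by move=> m; rewrite mem_undup mem_cat => ->.
Qed.

Lemma homog_decomp2 x y : exists t, [/\ uniq t, x = \sum_(m <- t) proj m x &
  y = \sum_(m <- t) proj m y].
Proof.
have [tx [_ hx _]] := homog_decomp x; have [ty [_ hy _]] := homog_decomp y.
exists (undup (tx ++ ty)); have ut := undup_uniq (tx ++ ty); split=> //.
  by apply: homog_decomp_on => // m; rewrite mem_undup mem_cat negb_or => /andP[/hx].
by apply: homog_decomp_on => // m; rewrite mem_undup mem_cat negb_or => /andP[_ /hy].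
Qed.

Lemma eq_proj x y : (forall k, proj k x = proj k y) -> x = y.
Proof.
move=> h; have [t [_ -> ->]] := homog_decomp2 x y.
by apply: eq_bigr => m _; rewrite h.
Qed.

Lemma proj_lin k a x y : proj k (a *: x + y) = a *: proj k x + proj k y.
Proof.
have [t [ut ex ey]] := homog_decomp2 x y.
rewrite {1}ex {1}ey scaler_sumr -big_split /= proj_sum_homog //; last first.
  by move=> m; apply: gr_lin; apply: proj_gr.
case: ifP => // /negbT kt.
by rewrite ex ey !proj_sum_homog ?(negbTE kt) ?scaler0 ?addr0 // => m; apply: proj_gr.
Qed.

Lemma proj0 k : proj k 0 = 0.
Proof. by rewrite (proj_homog k (gr0 (k + 1))); case: ifP. Qed.
Lemma projD k x y : proj k (x + y) = proj k x + proj k y.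
Proof. by have := proj_lin k 1 x y; rewrite !scale1r. Qed.
Lemma proj_sum k I (r : seq I) (P : pred I) (F : I -> A) :
  proj k (\sum_(i <- r | P i) F i) = \sum_(i <- r | P i) proj k (F i).
Proof. by apply: (big_morph (proj k)) => [x y|]; rewrite ?projD ?proj0. Qed.
Lemma proj_proj j k v : proj j (proj k v) = if j == k then proj k v else 0.
Proof. exact: proj_homog (proj_gr k v). Qed.

Lemma gr_of_proj k x : (forall j, j != k -> proj j x = 0) -> gr k x.
Proof.
move=> h; rewrite (@homog_decomp_on x [:: k]) // ?big_seq1; first exact: proj_gr.
by move=> m; rewrite inE => /h.
Qed.

Lemma proj_brl i k a y : gr i a -> proj (i + k) (br a y) = br a (proj k y).
Proof.
move=> ha; have [t [ut ht ey]] := homog_decomp y.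
rewrite {1}ey br_sumr proj_sum.
under eq_bigr => m _ do rewrite (proj_homog (i + k) (gr_br ha (proj_gr m y))) (inj_eq (addrI i)).
rewrite (sum_pred1_seq k (fun m => br a (proj m y))) //.
by case: ifP => // /negbT /ht ->; rewrite br0r.
Qed.

Lemma hsumP (p : pred int) v : hsum A p v <-> (forall k, ~~ p k -> proj k v = 0).
Proof.
split.
  case=> s [f [hf ->]] k nk; rewrite proj_sum big1 // => j pj.
  by rewrite (proj_homog k (hf j)); case: eqP => // e; move: nk; rewrite e pj.
move=> h; have [t [ut ht ev]] := homog_decomp v.
exists t, (fun m => proj m v); split; first by move=> k; apply: proj_gr.
by rewrite {1}ev (bigID p) /= [X in _ + X]big1 ?addr0 // => m /h.
Qed.

Lemma hsum_homog (p : pred int) k x : gr k x -> p k -> hsum A p x.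
Proof.
move=> hx pk; apply/hsumP => j nj; apply: (proj_eq0 hx).
by apply/eqP => e; move: nj; rewrite e pk.
Qed.

Lemma subspace_hsum (p : pred int) : subspace (hsum A p).
Proof.
split; first by apply/hsumP => k _; rewrite proj0.
move=> a x y /hsumP hx /hsumP hy; apply/hsumP => k nk.
by rewrite proj_lin hx // hy // scaler0 addr0.
Qed.

Lemma hsum_proj (p : pred int) k v : hsum A p v -> hsum A p (proj k v).
Proof.
move=> /hsumP hv; have [pk|npk] := boolP (p k); first exact: hsum_homog (proj_gr k v) pk.
by rewrite hv //; apply: subspace0; apply: subspace_hsum.
Qed.

Lemma graded_sub_proj (P : A -> Prop) k v : graded_sub P -> P v -> P (proj k v).
Proof.
case=> sP gP /gP [s [f [hf ->]]]; rewrite proj_sum; apply: subspace_sum => // j _.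
have [g1 p1] := hf j; rewrite (proj_homog k g1); case: ifP => // _; exact: subspace0.
Qed.

Lemma graded_sub_of_proj (P : A -> Prop) : subspace P ->
  (forall v k, P v -> P (proj k v)) -> graded_sub P.
Proof.
move=> sP hP; split=> // v Pv; have [t [ut ht ev]] := homog_decomp v.
exists t, (fun m => proj m v); split=> // k; split; [exact: proj_gr | exact: hP].
Qed.

Lemma graded_sub_hsum (p : pred int) : graded_sub (hsum A p).
Proof. by apply: graded_sub_of_proj; [exact: subspace_hsum | move=> v k; apply: hsum_proj]. Qed.

Lemma hsum_pos_br x y :
  hsum A (fun k => 0 < k) x -> hsum A (fun k => 0 < k) y -> hsum A (fun k => 0 < k) (br x y).
Proof.
have sUp := subspace_hsum (fun k => 0 < k).
move=> /hsumP hx /hsumP hy; have [t [_ ex ey]] := homog_decomp2 x y.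
rewrite ex ey br_suml; apply: subspace_sum => // m _.
rewrite br_sumr; apply: subspace_sum => // n _.
have [m0|m0] := lerP m 0; first by rewrite hx ?br0l; [exact: subspace0 | rewrite -leNgt].
have [n0|n0] := lerP n 0; first by rewrite hy ?br0r; [exact: subspace0 | rewrite -leNgt].
by apply: (hsum_homog (gr_br (proj_gr m x) (proj_gr n y))); exact: addr_gt0.
Qed.

End Graded.

Lemma proj_graded_map (K : numFieldType) (A B : lsalg K) (P : A -> Prop) (f : A -> B) k x :
  is_lsalg A -> is_lsalg B -> graded_sub P -> lin_on P f ->
  (forall j y, P y -> lsa_gr A j y -> lsa_gr B j (f y)) -> P x ->
  proj k (f x) = f (proj k x).
Proof.
move=> HA HB gP linf fdeg Px; have [sP _] := gP.
have [t [ut ht ev]] := homog_decomp HA x.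
rewrite {1}ev (lin_on_sum sP linf); last by move=> m _; apply: graded_sub_proj.
rewrite proj_sum_homog //; last by move=> m; apply: fdeg; [apply: graded_sub_proj | apply: proj_gr].
by case: ifP => // /negbT /ht ->; rewrite (lin_on0 sP linf).
Qed.

(** * Generation of U_+ by U_1 *)

Section Generation.
Variables (K : numFieldType) (U : lsalg K).
Hypothesis HU : is_lsalg U.
Local Notation br := (lsa_br U).
Local Notation gr := (lsa_gr U).
Local Notation Up := (hsum U (fun k => 0 < k)).

Inductive gen_homog : int -> U -> Prop :=
| gen_homog_deg1 u : gr 1 u -> gen_homog 1 u
| gen_homog0 k : gen_homog k 0
| gen_homog_lin k a x y : gen_homog k x -> gen_homog k y -> gen_homog k (a *: x + y)
| gen_homog_br i j x y : gen_homog i x -> gen_homog j y -> gen_homog (i + j) (br x y).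

Lemma gen_homog_gr k x : gen_homog k x -> gr k x.
Proof.
elim=> [u hu|k'|k' a x' y' _ hx _ hy|i j x' y' _ hx _ hy].
- by [].
- exact: gr0.
- exact: gr_lin.
- exact: gr_br.
Qed.

Lemma gen_homog_pos k x : gen_homog k x -> Up x.
Proof.
have sUp := subspace_hsum HU (fun k => 0 < k).
elim=> [u hu|k'|k' a x' y' _ hx _ hy|i j x' y' _ hx _ hy].
- exact: hsum_homog hu _.
- exact: subspace0.
- by case: sUp => _; apply.
- exact: hsum_pos_br.
Qed.

Definition gen_graded (v : U) := forall k, gen_homog k (proj k v).

Lemma gen_graded_subspace : subspace gen_graded.
Proof.
split; first by move=> k; rewrite proj0 //; apply: gen_homog0.
by move=> a x y hx hy k; rewrite proj_lin //; apply: gen_homog_lin.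
Qed.

Lemma gen_graded_homog k x : gen_homog k x -> gen_graded x.
Proof.
move=> h j; rewrite (proj_homog HU j (gen_homog_gr h)).
by case: eqP => [->|_] //; apply: gen_homog0.
Qed.

Lemma gen_graded_br x y : gen_graded x -> gen_graded y -> gen_graded (br x y).
Proof.
move=> hx hy; have [t [_ ex ey]] := homog_decomp2 HU x y.
rewrite ex ey br_suml //; apply: (subspace_sum gen_graded_subspace) => i _.
rewrite br_sumr //; apply: (subspace_sum gen_graded_subspace) => j _.
by apply: (@gen_graded_homog (i + j)); apply: gen_homog_br.
Qed.

Definition gen_gradedb : {pred U} :=
  fun v => if excluded_middle_informative (gen_graded v) then true else false.

Lemma gen_gradedP v : reflect (gen_graded v) (gen_gradedb v).
Proof. by rewrite /gen_gradedb; case: excluded_middle_informative => h; constructor. Qed.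

Lemma gen_gradedb_closed : subsemimod_closed gen_gradedb.
Proof.
have [P0 Plin] := gen_graded_subspace.
split; first split.
- exact/gen_gradedP.
- move=> x y /gen_gradedP hx /gen_gradedP hy; apply/gen_gradedP.
  by have := Plin 1 x y hx hy; rewrite scale1r.
- by move=> a x /gen_gradedP hx; apply/gen_gradedP; have := Plin a x 0 hx P0; rewrite addr0.
Qed.

HB.instance Definition _ := GRing.isSubmodClosed.Build K U gen_gradedb gen_gradedb_closed.
Definition gen_sub := {x : U | gen_gradedb x}.
HB.instance Definition _ := [isSub of gen_sub for (@sval U gen_gradedb)].
HB.instance Definition _ := [Choice of gen_sub by <:].
HB.instance Definition _ := [SubChoice_isSubLmodule of gen_sub by <:].

Lemma gen_sub_graded (x : gen_sub) : gen_graded (val x).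
Proof. exact/gen_gradedP/(valP x). Qed.

Lemma val_gen_sub_sum I (r : seq I) (Q : pred I) (F : I -> gen_sub) :
  val (\sum_(i <- r | Q i) F i) = \sum_(i <- r | Q i) val (F i).
Proof. by apply: (big_morph val). Qed.

Lemma insubd_gen_sub v : gen_graded v -> val (insubd (0 : gen_sub) v) = v.
Proof. by move=> h; rewrite insubdK //; apply/gen_gradedP. Qed.

Definition gen_sub_br (x y : gen_sub) : gen_sub :=
  exist _ (br (val x) (val y))
    (introT (gen_gradedP _) (gen_graded_br (gen_sub_graded x) (gen_sub_graded y))).

Definition gen_lsalg : lsalg K :=
  @LSAlg K gen_sub gen_sub_br (fun k x => gen_homog k (val x)).

Lemma gen_lsalg_is : is_lsalg gen_lsalg.
Proof.
split; [|split; [|split; [|split; [|split; [|split; [|split]]]]]].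
- by move=> a x y z; apply: val_inj => /=; rewrite br_linl.
- by move=> a x y z; apply: val_inj => /=; rewrite br_linr.
- by move=> k; split=> [|a x y]; [apply: gen_homog0 | apply: gen_homog_lin].
- move=> v; have [t [_ _ ev]] := homog_decomp HU (val v).
  exists t, (fun m => insubd (0 : gen_sub) (proj m (val v))); split.
    move=> k; have vk := gen_sub_graded v k.
    by rewrite /= insubd_gen_sub //; exact: gen_graded_homog vk.
  apply: val_inj; rewrite val_gen_sub_sum {1}ev; apply: eq_bigr => m _.
  by rewrite insubd_gen_sub //; exact: gen_graded_homog (gen_sub_graded v m).
- move=> s f us hf hs k ks; apply: val_inj.
  apply: (homog_sum_eq0 HU (f := fun k => val (f k)) us _ _ ks).
    by move=> j; apply: gen_homog_gr; apply: hf.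
  by rewrite -val_gen_sub_sum hs.
- by move=> i j x y; apply: gen_homog_br.
- move=> i j x y hx hy; apply: val_inj => /=.
  by rewrite (brC HU (gen_homog_gr hx) (gen_homog_gr hy)).
- move=> i j k x y z hx hy hz; apply: val_inj => /=.
  by rewrite -(br_jacobi HU (gen_homog_gr hx) (gen_homog_gr hy) (gen_homog_gr hz)).
Qed.

Hypothesis Huniv : universal U.

(* Freeness gives a homomorphism U_+ -> gen_lsalg fixing U_1; by uniqueness,
   its composite with the inclusion is the identity. *)
Lemma gen_graded_pos x : Up x -> gen_graded x.
Proof.
have [_ free] := Huniv.
have gen1 u : gr 1 u -> gen_graded u by move=> hu; apply/gen_graded_homog/gen_homog_deg1.
pose f v : gen_lsalg := insubd 0 v.
have flin : lin_on (gr 1) f.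
  move=> a u v hu hv; have huv : gr 1 (a *: u + v) by exact: gr_lin.
  by apply: val_inj; rewrite /= !insubd_gen_sub //; apply: gen1.
have fdeg u : gr 1 u -> lsa_gr gen_lsalg 1 (f u).
  by move=> hu; rewrite /= insubd_gen_sub; [apply: gen_homog_deg1 | apply: gen1].
have [h [h1 hlin hbr _]] := free _ gen_lsalg_is f flin fdeg.
have [idU [_ _ _ ext_uniq]] := free U HU id (fun _ _ _ _ _ => erefl) (fun _ hu => hu).
move=> hx; suff -> : x = val (h x) by exact: gen_sub_graded.
transitivity (idU x); first exact: (ext_uniq id).
symmetry; apply: (ext_uniq (fun v => val (h v))) => //.
- by move=> u hu /=; rewrite h1 // insubd_gen_sub //; apply: gen1.
- by move=> a x' y' h1' h2' /=; rewrite hlin.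
- by move=> x' y' h1' h2' /=; rewrite hbr.
Qed.

Lemma gen_homog_of_gr k x : 0 < k -> gr k x -> gen_homog k x.
Proof.
move=> k0 hx; have := gen_graded_pos (hsum_homog HU hx (p := fun k => 0 < k) k0) k.
by rewrite (proj_id HU hx).
Qed.

End Generation.

(** * Quotients of subalgebras containing U_+ *)

Lemma gen_by_sum (K : numFieldType) (A : lsalg K) (X : A -> Prop) I (r : seq I) (P : pred I) F :
  (forall i, P i -> gen_by X (F i)) -> gen_by X (\sum_(i <- r | P i) F i).
Proof.
move=> h; elim: r => [|i r IH]; first by rewrite big_nil; apply: gen_zero.
rewrite big_cons; case: ifP => // pi.
by have := gen_lin 1 (h i pi) IH; rewrite scale1r.
Qed.

Section QuotientProperties.
Variables (K : numFieldType) (U Q : lsalg K) (S : U -> Prop) (pi : U -> Q).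
Hypotheses (HU : is_lsalg U) (Huniv : universal U) (HQ : is_lsalg Q).
Hypotheses (gS : graded_sub S) (S_br : forall x y, S x -> S y -> S (lsa_br U x y))
  (S_pos : forall w, hsum U (fun k => 0 < k) w -> S w).
Hypotheses (pi_lin : lin_on S pi)
  (pi_gr : forall k x, S x -> lsa_gr U k x -> lsa_gr Q k (pi x))
  (pi_br : forall x y, S x -> S y -> pi (lsa_br U x y) = lsa_br Q (pi x) (pi y))
  (pi_surj : forall q, exists x, S x /\ pi x = q)
  (pi_ker : forall x, S x -> pi x = 0 -> hsum U (fun k => 2 <= k) x).
Local Notation grU := (lsa_gr U).
Local Notation grQ := (lsa_gr Q).

Lemma S_deg1 u : grU 1 u -> S u.
Proof. by move=> hu; apply/S_pos/(hsum_homog HU hu). Qed.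

Lemma pi_lift_homog k q : grQ k q -> exists s, [/\ S s, grU k s & pi s = q].
Proof.
move=> hq; have [s [Ss es]] := pi_surj q; exists (proj k s); split.
- exact: graded_sub_proj.
- exact: proj_gr.
- by rewrite -(proj_graded_map k HU HQ gS pi_lin pi_gr Ss) es (proj_id HQ).
Qed.

Lemma pi_ker_low k x : S x -> grU k x -> k <= 1 -> pi x = 0 -> x = 0.
Proof.
move=> Sx hx k1 /(pi_ker Sx) /hsumP -/(_ HU k).
by rewrite (proj_id HU hx) -ltNge; apply; lia.
Qed.

Lemma quot_pos0trans : pos0trans Q.
Proof.
move=> x hx hy; apply: (eq_proj HQ) => k; rewrite proj0 //.
have [k0|k0] := lerP k 0; last by move/(hsumP HQ): hx; apply; rewrite -ltNge.
have [s [Ss gs es]] := pi_lift_homog (proj_gr HQ k x).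
suff s0 : s = 0 by rewrite -es s0 (lin_on0 gS.1 pi_lin).
have [inj _] := Huniv.1 k k0; apply: inj => // u hu.
have Su := S_deg1 hu.
have us0 : lsa_br U u s = 0.
  apply: (pi_ker_low (k := 1 + k)); [exact: S_br | exact: gr_br | lia |].
  rewrite pi_br // es -(proj_brl HQ k x (pi_gr Su hu)) hy ?proj0 //.
  exact: hsum_homog (pi_gr Su hu) _.
by rewrite (brC HU gs hu) us0 scaler0 oppr0.
Qed.

Lemma pi_gen_homog k y : gen_homog k y -> gen_by (grQ 1) (pi y).
Proof.
have Sg k' y' : gen_homog k' y' -> S y' by move/(gen_homog_pos HU)/S_pos.
elim=> [u hu|k'|k' a x' y' hx IHx hy IHy|i j x' y' hx IHx hy IHy].
- by apply: gen_in; apply: pi_gr => //; apply: S_deg1.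
- by rewrite (lin_on0 gS.1 pi_lin); apply: gen_zero.
- by rewrite pi_lin; [apply: gen_lin | exact: Sg hx | exact: Sg hy].
- by rewrite pi_br; [apply: gen_br | exact: Sg hx | exact: Sg hy].
Qed.

Lemma quot_gen_deg1 : gen_deg1 Q.
Proof.
move=> v hv; have [t [_ _ ->]] := homog_decomp HQ v.
apply: gen_by_sum => m _; have [m0|m0] := lerP m 0.
  by move/(hsumP HQ): hv => ->; [exact: gen_zero | rewrite -leNgt].
have [s [_ gs <-]] := pi_lift_homog (proj_gr HQ m v).
exact/pi_gen_homog/(gen_homog_of_gr HU Huniv m0 gs).
Qed.

End QuotientProperties.

(** * G as a quotient of a subalgebra of U *)

Definition depth (k : int) : nat := `|1 - k|%N.

Lemma depthK k : k <= 1 -> 1 - (depth k)%:Z = k. Proof. rewrite /depth; lia. Qed.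

Section Presentation.
Variables (K : numFieldType) (U G : lsalg K) (g : U -> G).
Hypotheses (HU : is_lsalg U) (Huniv : universal U) (HG : is_lsalg G).
Hypotheses (pos0 : pos0trans G) (gen1 : gen_deg1 G).
Local Notation brU := (lsa_br U).
Local Notation brG := (lsa_br G).
Local Notation grU := (lsa_gr U).
Local Notation grG := (lsa_gr G).
Local Notation Up := (hsum U (fun k => 0 < k)).
Hypotheses (g_deg1 : forall u, grU 1 u -> grG 1 (g u))
  (g_inj1 : forall u v, grU 1 u -> grU 1 v -> g u = g v -> u = v)
  (g_surj1 : forall w, grG 1 w -> exists u, grU 1 u /\ g u = w)
  (g_lin : lin_on Up g)
  (g_br : forall x y, Up x -> Up y -> g (brU x y) = brG (g x) (g y)).

Lemma g0 : g 0 = 0. Proof. exact: lin_on0 (subspace_hsum HU _) g_lin. Qed.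

Lemma Up_homog k x : 0 < k -> grU k x -> Up x.
Proof. by move=> k0 hx; apply: (hsum_homog HU hx). Qed.

Lemma Up_deg1 u : grU 1 u -> Up u. Proof. exact: Up_homog. Qed.

Lemma g_gen_homog_gr k x : gen_homog k x -> grG k (g x).
Proof.
elim=> [u hu|k'|k' a x' y' hx IHx hy IHy|i j x' y' hx IHx hy IHy].
- exact: g_deg1.
- by rewrite g0; apply: (gr0 HG).
- have [px py] := (gen_homog_pos HU hx, gen_homog_pos HU hy).
  by rewrite g_lin //; exact: (gr_lin HG).
- have [px py] := (gen_homog_pos HU hx, gen_homog_pos HU hy).
  by rewrite g_br //; exact: (gr_br HG).
Qed.

Lemma g_gr k x : 0 < k -> grU k x -> grG k (g x).
Proof. by move=> k0 hx; apply/g_gen_homog_gr/(gen_homog_of_gr HU Huniv k0 hx). Qed.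

Lemma g_surj q : hsum G (fun k => 0 < k) q -> exists w, Up w /\ g w = q.
Proof.
have sUp := subspace_hsum HU (fun k => 0 < k).
move=> /gen1; elim=> [y hy||a x y _ [w1 [u1 <-]] _ [w2 [u2 <-]]|x y _ [w1 [u1 <-]] _ [w2 [u2 <-]]].
- by have [u [hu <-]] := g_surj1 hy; exists u; split=> //; exact: Up_deg1.
- by exists 0; split; [exact: subspace0 | exact: g0].
- by exists (a *: w1 + w2); split; [case: sUp => _; apply | rewrite g_lin].
- by exists (brU w1 w2); split; [exact: hsum_pos_br | rewrite g_br].
Qed.

Lemma g_surj_homog k q : 0 < k -> grG k q -> exists w, grU k w /\ g w = q.
Proof.
move=> k0 hq; have [w [uw ew]] := g_surj (hsum_homog HG hq (p := fun k => 0 < k) k0).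
exists (proj k w); split; first exact: proj_gr.
have g_gr_Up j y : Up y -> grU j y -> grG j (g y).
  move=> uy hy; have [j0|j0] := lerP j 0; last exact: g_gr.
  have -> : y = 0 by rewrite -(proj_id HU hy); move/(hsumP HU): uy; apply; rewrite -leNgt.
  by rewrite g0; apply: (gr0 HG).
by rewrite -(proj_graded_map k HU HG (graded_sub_hsum HU _) g_lin g_gr_Up uw) ew (proj_id HG hq).
Qed.

Lemma br_g_gen_homog_eq0 k z m w : grG k z -> (forall u, grU 1 u -> brG z (g u) = 0) ->
  gen_homog m w -> brG (g w) z = 0.
Proof.
move=> hz hu; elim=> [u' hu'|m'|m' a x y hx IHx hy IHy|i j x y hx IHx hy IHy].
- by rewrite (brC HG (g_deg1 hu') hz) hu // scaler0 oppr0.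
- by rewrite g0 br0l.
- have [px py] := (gen_homog_pos HU hx, gen_homog_pos HU hy).
  by rewrite g_lin // br_linl // IHx IHy scaler0 addr0.
- have [px py] := (gen_homog_pos HU hx, gen_homog_pos HU hy).
  rewrite g_br // -(br_jacobi HG (g_gen_homog_gr hx) (g_gen_homog_gr hy) hz) IHx IHy.
  by rewrite !br0r // scaler0 subr0.
Qed.

Lemma deg1_annihilator_eq0 k z : k <= 0 -> grG k z ->
  (forall u, grU 1 u -> brG z (g u) = 0) -> z = 0.
Proof.
move=> k0 hz hu; apply: pos0; first exact: hsum_homog hz _.
move=> y hy; have [t [_ _ ->]] := homog_decomp HG y.
rewrite br_suml // big1 // => m _; have [m0|m0] := lerP m 0.
  by move/(hsumP HG): hy => ->; [rewrite br0l | rewrite -leNgt].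
have [w [hw <-]] := g_surj_homog m0 (proj_gr HG m y).
exact: br_g_gen_homog_eq0 hz hu (gen_homog_of_gr HU Huniv m0 hw).
Qed.

(* [corr n t x]: t in U_{1-n} and x in G_{1-n} correspond, i.e. bracketing both
   n times with the same elements u of U_1 (g u on the side of G) yields
   elements of degree 1 related by g. *)
Fixpoint corr (n : nat) (t : U) (x : G) : Prop :=
  match n with
  | 0 => grU 1 t /\ g t = x
  | n'.+1 => [/\ grU (- n'%:Z) t, grG (- n'%:Z) x &
              forall u, grU 1 u -> corr n' (brU t u) (brG x (g u))]
  end.

Lemma corr_gr n t x : corr n t x -> grU (1 - n%:Z) t /\ grG (1 - n%:Z) x.
Proof.
case: n => [[h <-]|n [h1 h2 _]]; first by rewrite subr0; split=> //; apply: g_deg1.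
by have -> : 1 - (n.+1)%:Z = - n%:Z by lia.
Qed.

Lemma corr_depth_gr k t x : k <= 1 -> corr (depth k) t x -> grU k t /\ grG k x.
Proof. by move=> k1 /corr_gr; rewrite depthK. Qed.

Lemma corr0 n : corr n 0 0.
Proof.
elim: n => [|n IH] /=; first by split; [apply: (gr0 HU) | exact: g0].
by split; [exact: (gr0 HU) | exact: (gr0 HG) | move=> u _; rewrite !br0l].
Qed.

Lemma corr_lin n a t x t' x' :
  corr n t x -> corr n t' x' -> corr n (a *: t + t') (a *: x + x').
Proof.
elim: n a t x t' x' => [|n IH] a t x t' x' /=.
  move=> [h <-] [h' <-]; split; first exact: (gr_lin HU).
  by rewrite g_lin //; apply: Up_deg1.
move=> [h1 h2 h3] [h1' h2' h3']; split; [exact: (gr_lin HU) | exact: (gr_lin HG) |].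
by move=> u hu; rewrite !br_linl //; apply: IH; [apply: h3 | apply: h3'].
Qed.

Lemma corr_fun n t x x' : corr n t x -> corr n t x' -> x = x'.
Proof.
elim: n t x x' => [|n IH] t x x' /=; first by move=> [_ <-] [_ <-].
move=> [h1 h2 h3] [_ h2' h3']; apply/eqP; rewrite -subr_eq0; apply/eqP.
apply: (deg1_annihilator_eq0 (k := - n%:Z)); [lia | exact: (grB HG) |].
by move=> u hu; rewrite brBl // (IH _ _ _ (h3 u hu) (h3' u hu)) subrr.
Qed.

Lemma corr_inj n t t' x : corr n t x -> corr n t' x -> t = t'.
Proof.
elim: n t t' x => [|n IH] t t' x /=.
  by move=> [h e] [h' e']; apply: g_inj1 => //; rewrite e e'.
move=> [h1 h2 h3] [h1' _ h3']; apply/eqP; rewrite -subr_eq0; apply/eqP.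
have [inj _] := Huniv.1 (- n%:Z) ltac:(lia).
apply: inj; first exact: (grB HU).
by move=> u hu; rewrite brBl // (IH _ _ _ (h3 u hu) (h3' u hu)) subrr.
Qed.

(* The correspondents of the brackets [x, g u] depend linearly on u, so the
   surjectivity of ad : U_{-n} -> Hom(U_1, U_{1-n}) realizes them as [t, u]. *)
Lemma corr_total n x : grG (1 - n%:Z) x -> exists t, corr n t x.
Proof.
elim: n x => [|n IH] x hx.
  rewrite subr0 in hx; have [u [hu e]] := g_surj1 hx; by exists u.
have hx' : grG (- n%:Z) x by move: hx; have -> : 1 - (n.+1)%:Z = - n%:Z by lia.
have hb u : grU 1 u -> grG (1 - n%:Z) (brG x (g u)).
  by move=> hu; have := gr_br HG hx' (g_deg1 hu); rewrite addrC.
pose phi u := epsilon (inhabits 0) (fun t => corr n t (brG x (g u))).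
have phiP u : grU 1 u -> corr n (phi u) (brG x (g u)).
  move=> hu; apply: (epsilon_spec (inhabits 0) (fun t => corr n t (brG x (g u)))).
  exact: IH (hb u hu).
have philin : lin_on (grU 1) phi.
  move=> a u v hu hv; have huv : grU 1 (a *: u + v) by exact: (gr_lin HU).
  apply: (corr_inj (phiP _ huv)).
  rewrite g_lin ?br_linr //; [by apply: corr_lin; apply: phiP | exact: Up_deg1 ..].
have phideg u : grU 1 u -> grU (- n%:Z + 1) (phi u).
  by move=> hu; have [+ _] := corr_gr (phiP u hu); rewrite addrC.
have [_ surj] := Huniv.1 (- n%:Z) ltac:(lia).
have [t [ht et]] := surj phi philin phideg.
by exists t; split=> // u hu; rewrite et //; exact: phiP.
Qed.

Lemma corr_br n m a b x y :
  corr n.+1 a x -> corr m b y -> corr (n + m) (brU a b) (brG x y).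
Proof.
move eL: (n + m)%N => L; elim: L => [|L IH] in n m a b x y eL *.
  by case: m eL => [|m] eL; [rewrite addn0 in eL; subst n => -[_ _ Ca] [hb <-]; apply: Ca | lia].
case: m eL => [|m] eL Ca Cb.
  by rewrite addn0 in eL; subst n; case: Ca => _ _ Ca; case: Cb => hb <-; apply: Ca.
have [ha hx Cau] := Ca; have [hb hy Cbu] := Cb.
split.
- by have := gr_br HU ha hb; have -> : - n%:Z + - m%:Z = - L%:Z by lia.
- by have := gr_br HG hx hy; have -> : - n%:Z + - m%:Z = - L%:Z by lia.
move=> u hu; rewrite -(br_jacobi HU ha hb hu) -(br_jacobi HG hx hy (g_deg1 hu)).
have c1 := IH n m _ _ _ _ ltac:(lia) Ca (Cbu u hu).
have c2 := IH m n _ _ _ _ ltac:(lia) Cb (Cau u hu).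
by rewrite addrC [X in corr _ _ X]addrC -!scaleNr; apply: corr_lin.
Qed.

Definition corr_map (k : int) (t : U) : G :=
  if 0 < k then g t else epsilon (inhabits 0) (fun x => corr (depth k) t x).

Lemma corr_map_pos k t : 0 < k -> corr_map k t = g t.
Proof. by move=> k0; rewrite /corr_map k0. Qed.

Lemma corr_map_corr k t x : k <= 0 -> corr (depth k) t x -> corr_map k t = x.
Proof.
move=> k0 h; rewrite /corr_map ifN -?leNgt //; apply: (corr_fun _ h).
by apply: (epsilon_spec (inhabits 0) (fun x => corr (depth k) t x)); exists x.
Qed.

Lemma corr_map0 k : corr_map k 0 = 0.
Proof.
have [k0|k0] := lerP k 0; first exact: corr_map_corr (corr0 _).
by rewrite corr_map_pos // g0.
Qed.

(* [SG] is T_{0-} (+) U_+, where T_{0-} is the image of G_{0-} under the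
   inverse of [corr]. *)
Definition SG (v : U) := forall k, k <= 0 -> exists x, corr (depth k) (proj k v) x.
Definition TG (v : U) := (forall k, 0 < k -> proj k v = 0) /\ SG v.
Definition piG (v : U) : G :=
  epsilon (inhabits 0) (fun y => forall k, proj k y = corr_map k (proj k v)).
Definition DG (v : U) := SG v /\ piG v = 0.

Lemma SG_subspace : subspace SG.
Proof.
split; first by move=> k _; rewrite proj0 //; exists 0; exact: corr0.
move=> a x y hx hy k k0; have [x1 c1] := hx k k0; have [y1 c2] := hy k k0.
by rewrite proj_lin //; exists (a *: x1 + y1); apply: corr_lin.
Qed.

Lemma SG_homog k c : grU k c -> (k <= 0 -> exists x, corr (depth k) c x) -> SG c.
Proof.
move=> hc h j j0; rewrite (proj_homog HU j hc).
by case: eqP => [e|_]; [subst j; exact: h | exists 0; apply: corr0].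
Qed.

Lemma SG_proj k v : SG v -> SG (proj k v).
Proof. by move=> hv; apply: (SG_homog (proj_gr HU k v)) => k0; have := hv k k0. Qed.

Lemma TplusUp_TG : TplusUp TG = SG.
Proof.
apply: functional_extensionality => v; apply: propositional_extensionality; split.
  case=> t [w [[_ ht] [hw ->]]] k k0; rewrite projD //.
  by move/(hsumP HU): hw => ->; [rewrite addr0; apply: ht | rewrite -leNgt].
move=> hv; have [s [us _ ev]] := homog_decomp HU v.
have gm (b : bool) m : grU m (if b then proj m v else 0).
  by case: b; [apply: proj_gr | apply: gr0].
exists (\sum_(m <- s) (if m <= 0 then proj m v else 0)).
exists (\sum_(m <- s) (if 0 < m then proj m v else 0)); split; [split|split].
- by move=> k k0; rewrite proj_sum_homog //; case: ifP => // _; rewrite leNgt k0.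
- move=> k k0; rewrite proj_sum_homog //; case: ifP => _; last by exists 0; apply: corr0.
  by rewrite k0; apply: hv.
- apply/(hsumP HU) => k /= k0; rewrite proj_sum_homog //; case: ifP => // _.
  by rewrite (negbTE k0).
- rewrite -big_split /= {1}ev; apply: eq_bigr => m _.
  by case: (lerP m 0) => _; rewrite ?addr0 ?add0r.
Qed.

Lemma proj_piG v k : SG v -> proj k (piG v) = corr_map k (proj k v).
Proof.
move=> hv; move: k; apply: (epsilon_spec (inhabits 0)
  (fun y => forall k, proj k y = corr_map k (proj k v))).
have [s [us hs _]] := homog_decomp HU v.
exists (\sum_(m <- s) corr_map m (proj m v)) => k.
rewrite proj_sum_homog //; last first.
  move=> m; have [m0|m0] := lerP m 0.
    have [x cx] := hv m m0; rewrite (corr_map_corr m0 cx).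
    by have [] := corr_depth_gr (le_trans m0 ler01) cx.
  by rewrite corr_map_pos //; apply: g_gr => //; apply: proj_gr.
by case: ifP => // /negbT /hs ->; rewrite corr_map0.
Qed.

Lemma piG_gr k x : SG x -> grU k x -> grG k (piG x).
Proof.
move=> hx gx; apply: (gr_of_proj HG) => j jk.
by rewrite proj_piG // (proj_eq0 HU gx jk) corr_map0.
Qed.

Lemma piG_homog k c : SG c -> grU k c -> piG c = corr_map k c.
Proof. by move=> hc gc; rewrite -(proj_id HG (piG_gr hc gc)) proj_piG // (proj_id HU gc). Qed.

Lemma piG_lin : lin_on SG piG.
Proof.
move=> a x y hx hy; have hxy : SG (a *: x + y) by case: SG_subspace => _; apply.
apply: (eq_proj HG) => k; rewrite proj_lin // !proj_piG // proj_lin //.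
have [k0|k0] := lerP k 0.
  have [x1 c1] := hx k k0; have [y1 c2] := hy k k0.
  rewrite (corr_map_corr k0 c1) (corr_map_corr k0 c2).
  by apply: corr_map_corr => //; apply: corr_lin.
by rewrite !corr_map_pos // g_lin //; apply: (Up_homog k0); apply: proj_gr.
Qed.

Lemma piG0 : piG 0 = 0. Proof. exact: lin_on0 SG_subspace piG_lin. Qed.

Lemma SG_corr k c x : k <= 1 -> corr (depth k) c x -> SG c /\ piG c = x.
Proof.
move=> k1 cx; have [gc _] := corr_depth_gr k1 cx.
have Sc : SG c by apply: (SG_homog gc) => _; exists x.
split; rewrite // (piG_homog Sc gc).
have [k0|k0] := lerP k 0; first exact: corr_map_corr.
have ek : k = 1 by lia.
by subst k; move: cx; rewrite corr_map_pos // /depth subrr => -[].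
Qed.

Lemma SG_pos k c : 0 < k -> grU k c -> SG c /\ piG c = g c.
Proof.
move=> k0 gc; have Sc : SG c by apply: (SG_homog gc) => k0'; lia.
by rewrite (piG_homog Sc gc) corr_map_pos.
Qed.

Lemma corr_piG k c : SG c -> grU k c -> k <= 1 -> corr (depth k) c (piG c).
Proof.
move=> hc gc k1; have [k0|k0] := lerP k 0.
  have [x cx] := hc k k0; rewrite (proj_id HU gc) in cx.
  by have [_ ->] := SG_corr k1 cx.
have ek : k = 1 by lia.
by subst k; rewrite (SG_pos ltr01 gc).2 /depth subrr.
Qed.

Lemma piG_proj k v : SG v -> piG (proj k v) = proj k (piG v).
Proof. by move=> Sv; rewrite proj_piG // (piG_homog (SG_proj k Sv) (proj_gr HU k v)). Qed.

Lemma piGZ a v : SG v -> piG (a *: v) = a *: piG v.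
Proof. exact: (lin_onZ SG_subspace piG_lin a). Qed.
Lemma piGN v : SG v -> piG (- v) = - piG v.
Proof. exact: (lin_onN SG_subspace piG_lin). Qed.
Lemma piGB v w : SG v -> SG w -> piG (v - w) = piG v - piG w.
Proof. exact: (lin_onB SG_subspace piG_lin). Qed.

Definition br_compat (b : U) := forall k c, SG c -> grU k c ->
  SG (brU c b) /\ piG (brU c b) = brG (piG c) (g b).

Lemma br_compat_deg1 u : grU 1 u -> br_compat u.
Proof.
move=> hu k c hc gc; have gcu := gr_br HU gc hu.
have [k0|k0] := lerP k 0; last first.
  have [Scu ->] := SG_pos (addr_gt0 k0 ltr01) gcu; have [_ ->] := SG_pos k0 gc.
  by split=> //; rewrite g_br //; [exact: Up_homog k0 gc | exact: Up_deg1].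
have := corr_piG hc gc (le_trans k0 ler01); case E: (depth k) => [|n] /=.
  by move: E; rewrite /depth; lia.
case=> _ _ /(_ u hu) Cn; apply: (SG_corr (k := k + 1)); first lia.
by have -> : depth (k + 1) = n by move: E; rewrite /depth; lia.
Qed.

Lemma br_compat0 : br_compat 0.
Proof.
by move=> k c hc _; rewrite !br0r // g0 br0r // piG0; split=> //; exact: subspace0 SG_subspace.
Qed.

Lemma br_compat_lin k a x y : gen_homog k x -> gen_homog k y ->
  br_compat x -> br_compat y -> br_compat (a *: x + y).
Proof.
move=> hx hy cx cy j c hc gc; have [Scx ecx] := cx j c hc gc; have [Scy ecy] := cy j c hc gc.
rewrite br_linr //; split; first by case: SG_subspace => _; apply.
rewrite piG_lin // ecx ecy g_lin ?br_linr //.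
  exact: (gen_homog_pos HU hx).
exact: (gen_homog_pos HU hy).
Qed.

Lemma br_compat_br i j x y : gen_homog i x -> gen_homog j y ->
  br_compat x -> br_compat y -> br_compat (brU x y).
Proof.
move=> hx hy cx cy k c hc gc; have gx := gen_homog_gr HU hx; have gy := gen_homog_gr HU hy.
have [Scx ecx] := cx k c hc gc; have [Scxy ecxy] := cy _ _ Scx (gr_br HU gc gx).
have [Scy ecy] := cy k c hc gc; have [Scyx ecyx] := cx _ _ Scy (gr_br HU gc gy).
rewrite (br_jacobi_right HU gc gx gy) g_br; last 2 first.
- exact: (gen_homog_pos HU hx).
- exact: (gen_homog_pos HU hy).
rewrite (br_jacobi_right HG (piG_gr hc gc) (g_gen_homog_gr hx) (g_gen_homog_gr hy)).
have SZ := subspaceZ SG_subspace.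
split; first exact: subspaceB SG_subspace _ _ Scxy (SZ _ _ Scyx).
by rewrite piGB ?piGZ ?ecxy ?ecx ?ecyx ?ecy //; apply: SZ.
Qed.

Lemma br_compat_gen k b : gen_homog k b -> br_compat b.
Proof.
elim=> [u hu|k'|k' a x y hx cx hy cy|i j x y hx cx hy cy].
- exact: br_compat_deg1.
- exact: br_compat0.
- exact: br_compat_lin hx hy cx cy.
- exact: br_compat_br hx hy cx cy.
Qed.

Lemma piG_br_homog ka kb a b : SG a -> SG b -> grU ka a -> grU kb b ->
  SG (brU a b) /\ piG (brU a b) = brG (piG a) (piG b).
Proof.
move=> Sa Sb ga gb; have [kb0|kb0] := lerP kb 0; last first.
  have [_ ->] := SG_pos kb0 gb.
  exact: br_compat_gen (gen_homog_of_gr HU Huniv kb0 gb) _ _ Sa ga.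
have [ka0|ka0] := lerP ka 0; last first.
  have [_ ->] := SG_pos ka0 ga.
  have [Sba eba] := br_compat_gen (gen_homog_of_gr HU Huniv ka0 ga) Sb gb.
  rewrite (brC HU ga gb) (brC HG (g_gr ka0 ga) (piG_gr Sb gb)) -eba.
  have SZ := subspaceZ SG_subspace (ssign K ka kb) Sba.
  by split; [exact: (subspaceN SG_subspace SZ) | rewrite piGN ?piGZ].
have := corr_piG Sa ga (le_trans ka0 ler01); case E: (depth ka) => [|n] Ca.
  by move: E; rewrite /depth; lia.
apply: (SG_corr (k := ka + kb)); first lia.
have -> : depth (ka + kb) = (n + depth kb)%N by move: E; rewrite /depth; lia.
exact: corr_br Ca (corr_piG Sb gb (le_trans kb0 ler01)).
Qed.

Lemma piG_br x y : SG x -> SG y -> SG (brU x y) /\ piG (brU x y) = brG (piG x) (piG y).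
Proof.
move=> hx hy; have [tx [_ _ ex]] := homog_decomp HU x; have [ty [_ _ ey]] := homog_decomp HU y.
have Px m := SG_proj m hx; have Py n := SG_proj n hy.
have Pxy m n := piG_br_homog (Px m) (Py n) (proj_gr HU m x) (proj_gr HU n y).
have e : brU x y = \sum_(m <- tx) \sum_(n <- ty) brU (proj m x) (proj n y).
  by rewrite {1}ex {1}ey br_suml //; apply: eq_bigr => m _; rewrite br_sumr.
have Ssum m : SG (\sum_(n <- ty) brU (proj m x) (proj n y)).
  by apply: (subspace_sum SG_subspace) => n _; case: (Pxy m n).
split; first by rewrite e; apply: (subspace_sum SG_subspace).
rewrite {2}ex {2}ey !(lin_on_sum SG_subspace piG_lin) // e.
rewrite (lin_on_sum SG_subspace piG_lin) // br_suml //; apply: eq_bigr => m _.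
rewrite (lin_on_sum SG_subspace piG_lin) => [|n _]; last by case: (Pxy m n).
by rewrite br_sumr //; apply: eq_bigr => n _; case: (Pxy m n).
Qed.

Lemma SG_graded : graded_sub SG.
Proof. by apply: (graded_sub_of_proj HU SG_subspace) => v k; apply: SG_proj. Qed.

Lemma good_TG : good_T TG.
Proof.
rewrite /good_T TplusUp_TG; split.
- apply: (graded_sub_of_proj HU) => [|v k [h1 h2]]; last first.
    split; last exact: SG_proj.
    by move=> j j0; rewrite proj_proj //; case: eqP => // e; subst j; apply: h1.
  split; first by split; [move=> k _; apply: proj0 | exact: subspace0 SG_subspace].
  move=> a x y [hx1 hx2] [hy1 hy2]; split; last by case: SG_subspace => _; apply.
  by move=> k k0; rewrite proj_lin // hx1 // hy1 // scaler0 addr0.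
- by move=> v [h1 _]; apply/(hsumP HU) => k /= k0; apply: h1; rewrite ltNge.
- by split; [exact: SG_graded | move=> x y hx hy; case: (piG_br hx hy)].
Qed.

Lemma ideal_DG : ideal_in SG DG.
Proof.
split; [|split; [by move=> x [] | split]].
- apply: (graded_sub_of_proj HU) => [|v k [Sv pv]]; last first.
    by split; [exact: SG_proj | rewrite piG_proj // pv proj0].
  split; first by split; [exact: subspace0 SG_subspace | exact: piG0].
  move=> a x y [hx px] [hy py]; split; first by case: SG_subspace => _; apply.
  by rewrite piG_lin // px py scaler0 addr0.
- by move=> x y hx [hy py]; have [Sxy exy] := piG_br hx hy; split; rewrite // exy py br0r.
- by move=> x y [hx px] hy; have [Sxy exy] := piG_br hx hy; split; rewrite // exy px br0l.
Qed.

Lemma DG_deg2 v : DG v -> hsum U (fun k => 2 <= k) v.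
Proof.
move=> [Sv pv]; apply/(hsumP HU) => k /= k2.
apply: (corr_inj (corr_piG (SG_proj k Sv) (proj_gr HU k v) _)); first lia.
by rewrite piG_proj // pv proj0 //; exact: corr0.
Qed.

Lemma piG_surj_homog m q : grG m q -> exists t, SG t /\ piG t = q.
Proof.
move=> hq; have [m0|m0] := lerP m 0; last first.
  by have [w [hw <-]] := g_surj_homog m0 hq; exists w; exact: SG_pos m0 hw.
have m1 := le_trans m0 ler01; rewrite -(depthK m1) in hq.
by have [t ct] := corr_total hq; exists t; exact: SG_corr m1 ct.
Qed.

Lemma piG_surj q : exists x, SG x /\ piG x = q.
Proof.
have sIm : subspace (fun q => exists x, SG x /\ piG x = q).
  split; first by exists 0; split; [exact: subspace0 SG_subspace | exact: piG0].
  move=> a _ _ [x [Sx <-]] [y [Sy <-]]; exists (a *: x + y).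
  by split; [case: SG_subspace => _; apply | rewrite piG_lin].
have [s [_ _ ->]] := homog_decomp HG q.
by apply: (subspace_sum sIm) => m _; exact: piG_surj_homog (proj_gr HG m q).
Qed.

Lemma quot_iso_piG : quot_iso SG DG G.
Proof.
exists piG; split.
- exact: piG_lin.
- by move=> k x; apply: piG_gr.
- by move=> x y hx hy; case: (piG_br hx hy).
- exact: piG_surj.
- by move=> x hx; split=> [|[]].
Qed.

Lemma presentation : exists T D : U -> Prop,
  [/\ good_T T, ideal_in (TplusUp T) D,
      forall v, D v -> hsum U (fun k => 2 <= k) v & quot_iso (TplusUp T) D G].
Proof.
exists TG, DG; rewrite TplusUp_TG.
by split; [exact: good_TG | exact: ideal_DG | exact: DG_deg2 | exact: quot_iso_piG].
Qed.

End Presentation.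

Theorem theorem3p5 (K : numFieldType) (U : lsalg K) :
  is_lsalg U -> universal U ->
  (* (a) *)
  (forall G : lsalg K,
     is_lsalg G -> pos0trans G -> gen_deg1 G -> iso_deg1 U G ->
     exists T D : U -> Prop,
       [/\ good_T T, ideal_in (TplusUp T) D,
           forall v, D v -> hsum U (fun k => 2 <= k) v &
           quot_iso (TplusUp T) D G]) /\
  (* (b) *)
  (forall T D : U -> Prop,
     good_T T -> ideal_in (TplusUp T) D ->
     (forall v, D v -> hsum U (fun k => 2 <= k) v) ->
     forall Q : lsalg K, is_lsalg Q -> quot_iso (TplusUp T) D Q ->
       pos0trans Q /\ gen_deg1 Q).
Proof.
move=> HU Huniv; split.
- move=> G HG pos0 gen1 [i [ilin ideg iinj isurj]].
  have [g [g1 glin gbr _]] := Huniv.2 G HG i ilin ideg.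
  apply: (presentation HU Huniv HG pos0 gen1 (g := g)) => //.
  + by move=> u hu; rewrite g1 //; apply: ideg.
  + by move=> u v hu hv; rewrite !g1 //; apply: iinj.
  + by move=> w /isurj [u [hu <-]]; exists u; rewrite g1.
- move=> T D [gT _ [gS S_br]] _ Dpos Q HQ [pi [plin pgr pbr psurj pker]].
  have S_pos w : hsum U (fun k => 0 < k) w -> TplusUp T w.
    by move=> hw; exists 0, w; rewrite add0r; split=> //; exact: subspace0 gT.1.
  have ker x : TplusUp T x -> pi x = 0 -> hsum U (fun k => 2 <= k) x.
    by move=> Sx /(pker x Sx) /Dpos.
  by split; [apply: (quot_pos0trans (S := TplusUp T) (pi := pi)) |
             apply: (quot_gen_deg1 (S := TplusUp T) (pi := pi))].
Qed.
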